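(* For every $M\geq 1$, $$g_1(M)=\sum_{k\geq 0}(k+1)\binom{M-k-1}{k+1},$$ where binomial coefficients $\binom{a}{b}$ with $b>a$ are zero.
   Context: The perimeter of a nonempty partition $\lambda$ with largest part $\lambda_1$ and $\ell(\lambda)$ parts is $\lambda_1+\ell(\lambda)-1$. $g_1(M)$ is the number of partitions with perimeter $M$ in which exactly one distinct even integer occurs as a part (possibly with multiplicity greater than one) and all other parts are odd. *)

From mathcomp Require Import all_boot.
Set Implicit Arguments. Unset Strict Implicit. Unset Printing Implicit Defensive.

Definition is_partition (l : seq nat) : bool :=
  all (fun x => 0 < x) l && sorted geq l.

Definition perimeter (l : seq nat) : nat := head 0 l + size l - 1.

Definition one_even_part (l : seq nat) : bool :=
  size (undup (filter (fun x => ~~ odd x) l)) == 1.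

Definition g1_pred (M : nat) (l : seq nat) : bool :=
  [&& is_partition l, l != [::], perimeter l == M & one_even_part l].

Definition counts (P : seq nat -> bool) (c : nat) : Prop :=
  exists L : seq (seq nat), [/\ uniq L, (forall l, (l \in L) = P l) & size L = c].

From mathcomp Require Import all_boot zify.

(* A partition of perimeter M is its largest part a followed by a nonincreasing
   sequence of M - a parts in [1, a]; such sequences with all parts in a set of
   c values are multisets, counted by 'C(M - a + c - 1, M - a).  If a = 2i, it
   is the even part, the other parts are odd or equal to a, and there are
   'C(M - i, i) choices.  If a = 2j + 1, the even part is one of j values e, and
   for each e the sequences over the odd numbers and e minus those over the odd
   numbers alone number 'C(M - j - 1, j + 1).  Pairing a = 2k + 1 with
   a = 2k + 2 yields the summand (k + 1) 'C(M - k - 1, k + 1). *)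

Fixpoint bounded_partitions (n m : nat) : seq (seq nat) :=
  if n is n'.+1 then [seq x :: s | x <- iota 1 m, s <- bounded_partitions n' x]
  else [:: [::]].

Lemma geq_trans : transitive geq.
Proof. exact: rev_trans leq_trans. Qed.

Lemma mem_bounded_partitions n m s :
  (s \in bounded_partitions n m) =
  [&& size s == n, all (fun x => 0 < x <= m) s & sorted geq s].
Proof.
elim: n m s => [|n IH] m s /=; first by case: s.
apply/allpairsPdep/idP => [[x [t [hx ht ->]]]|].
  move: hx ht; rewrite IH mem_iota /= => hx /and3P[/eqP-> ht hsort].
  rewrite (path_sortedE geq_trans) hsort eqxx !andbT /= -andbA.
  apply/and3P; split; [lia | |]; apply/allP => z /(allP ht) /=; lia.
case: s => [|x s] //=; rewrite (path_sortedE geq_trans).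
move=> /and3P[/eqP[hs] /andP[hx hb] /andP[hxs hsort]].
exists x, s; split => //; first by rewrite mem_iota; lia.
rewrite IH hs eqxx hsort andbT; apply/allP => z hz.
by have := allP hb z hz; have := allP hxs z hz => /=; lia.
Qed.

Lemma uniq_bounded_partitions n m : uniq (bounded_partitions n m).
Proof.
elim: n m => [|n IH] m //=; apply: allpairs_uniq_dep => //; first exact: iota_uniq.
by move=> [a s] [b t] _ _ /= [-> ->].
Qed.

Lemma count_allpairs_cons (P : pred (seq nat)) m (t : nat -> seq (seq nat)) :
  count P [seq x :: s | x <- iota 1 m, s <- t x] =
  \sum_(1 <= x < m.+1) count (fun s => P (x :: s)) (t x).
Proof.
rewrite count_flatten sumnE !big_map /index_iota subn1.
by apply: eq_bigr => x _; rewrite count_map.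
Qed.

Lemma count_sumE (T : Type) (P : pred T) s : count P s = \sum_(x <- s) P x.
Proof. by rewrite -sumn_count sumnE big_map. Qed.

Definition count_to (V : pred nat) m := count V (iota 1 m).

Lemma count_toS V m : count_to V m.+1 = count_to V m + V m.+1.
Proof. by rewrite /count_to -(addn1 m) iotaD count_cat /= add1n addn1 addn0. Qed.

(* The step n -> n + 1 is the hockey-stick identity. *)
Lemma count_all_bounded_partitions (V : pred nat) n m :
  count (all V) (bounded_partitions n m) = 'C(n + count_to V m - 1, n).
Proof.
elim: n m => [|n IH] m; first by rewrite bin0.
rewrite count_allpairs_cons.
have count_cons x X : count (fun s => all V (x :: s)) X = V x * count (all V) X.
  by elim: X => [|s X /= ->]; rewrite ?muln0 // mulnDr; case: (V x); rewrite ?mul1n.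
under eq_bigr => x _ do rewrite count_cons IH.
elim: m => [|m IHm]; first by rewrite big_geq // bin_small // addn0 subn1.
rewrite big_nat_recr //= IHm count_toS.
case: (V m.+1); last by rewrite !addn0.
by rewrite mul1n addn1 addnS subn1 /= addSn addnS subn1 /= binS.
Qed.

Lemma count_to_odd m : count_to odd m = uphalf m.
Proof.
by elim: m => // m IH; rewrite count_toS IH uphalf_half /=; case: (odd m) => /=; lia.
Qed.

Lemma count_to_predU1 (V : pred nat) e m : ~~ V e -> 0 < e ->
  count_to (predU V (pred1 e)) m = count_to V m + (e <= m).
Proof.
move=> nVe e_gt0; have := count_predUI V (pred1 e) (iota 1 m).
rewrite (@eq_count _ (predI V (pred1 e)) pred0) ?count_pred0 ?addn0; last first.
  by move=> x /=; case: eqP => [->|_]; rewrite ?andbF // (negbTE nVe).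
by rewrite count_uniq_mem ?iota_uniq // mem_iota e_gt0 add1n ltnS.
Qed.

Definition evens a := [seq e <- iota 1 a | ~~ odd e].

Lemma size_evens a : size (evens a) = a./2.
Proof.
rewrite size_filter -(addKn (count odd (iota 1 a)) (count _ _)) count_predC size_iota.
rewrite -/(count_to odd a) count_to_odd -{1}(odd_double_half a) uphalf_half.
by rewrite -addnn subnDl addnK.
Qed.

Definition only_even_part e l := (e \in l) && all (predU odd (pred1 e)) l.

Lemma only_even_part_eq {e e' : nat} {l : seq nat} :
  ~~ odd e -> only_even_part e l -> only_even_part e' l -> e = e'.
Proof.
move=> ev /andP[el _] /andP[_ /allP/(_ e el)] /=.
by rewrite (negbTE ev) => /eqP.
Qed.

Lemma one_even_partE l :
  one_even_part l = has (fun e => ~~ odd e && only_even_part e l) l.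
Proof.
rewrite /one_even_part; set E := filter _ l; apply/idP/hasP.
  case defE: (undup E) => [|e [|]] // _.
  have : e \in undup E by rewrite defE inE.
  rewrite mem_undup mem_filter => /andP[ev el].
  exists e => //; rewrite ev /only_even_part el /=.
  apply/allP => x xl /=; case ox: (odd x) => //=.
  have : x \in undup E by rewrite mem_undup mem_filter ox.
  by rewrite defE inE.
move=> [e el /andP[ev /andP[_ /allP all_oe]]].
have sub_e : {subset undup E <= [:: e]}.
  move=> x; rewrite mem_undup mem_filter inE => /andP[ox xl].
  by have := all_oe x xl; rewrite /= (negbTE ox).
have := uniq_leq_size (undup_uniq E) sub_e.
have : e \in undup E by rewrite mem_undup mem_filter ev.
by case: (undup E) => [|y [|]].
Qed.

Lemma one_even_part_sum a l : all (fun x => 0 < x <= a) l ->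
  (one_even_part l : nat) = \sum_(e <- evens a) only_even_part e l.
Proof.
move=> bl; rewrite one_even_partE -count_sumE.
case: hasP => [[e0 e0l /andP[ev0 only0]] | no_even].
  rewrite (@eq_in_count _ _ (pred1 e0)); last first.
    move=> e; rewrite mem_filter => /andP[ev _] /=.
    by apply/idP/eqP => [/(only_even_part_eq ev)/(_ only0) | ->].
  rewrite count_uniq_mem ?filter_uniq ?iota_uniq // mem_filter ev0 mem_iota /=.
  by have := allP bl e0 e0l; rewrite add1n ltnS => ->.
rewrite (@eq_in_count _ _ pred0 (evens a)) ?count_pred0 // => e.
rewrite mem_filter => /andP[ev _]; apply/negbTE/negP => only.
by apply: no_even; exists e; [case/andP: only | rewrite ev].
Qed.

Lemma count_only_even_part e X : ~~ odd e ->
  count (only_even_part e) X = count (all (predU odd (pred1 e))) X - count (all odd) X.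
Proof.
move=> ev; have := count_predUI (only_even_part e) (all odd) X.
rewrite (@eq_count _ (predI _ _) pred0) ?count_pred0 ?addn0; last first.
  move=> s /=; apply/negbTE/andP => -[/andP[es _] /allP/(_ e es)].
  by rewrite (negbTE ev).
rewrite (@eq_count _ (predU _ _) (all (predU odd (pred1 e)))) => [->|s].
  by rewrite addnK.
apply/orP/idP => [[/andP[_ //] | ] | oes]; first by apply: sub_all => x /= ->.
case es: (e \in s); [by left; apply/andP | right].
apply/allP => x xs; have /orP[//|/eqP exe] := allP oes x xs.
by rewrite -exe xs in es.
Qed.

Lemma only_even_part_cons_odd e a s : ~~ odd e -> odd a ->
  only_even_part e (a :: s) = only_even_part e s.
Proof.
move=> ev oa; have /negbTE ea : e != a by apply/eqP => ea; rewrite ea oa in ev.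
by rewrite /only_even_part in_cons ea /= oa.
Qed.

Lemma one_even_part_cons_even a s : ~~ odd a ->
  one_even_part (a :: s) = all (predU odd (pred1 a)) s.
Proof.
move=> ev; rewrite one_even_partE /=; apply/orP/idP => [[|/hasP[e _]] | oas].
- by case/and3P => _ _ /andP[].
- case/and3P => _ _ /andP[/orP[oa | /eqP ae]]; first by rewrite oa in ev.
  by rewrite ae.
- by left; rewrite ev /only_even_part mem_head /= eqxx orbT.
Qed.

Lemma count_one_even_odd_largest j n :
  count (fun s => one_even_part (j.*2.+1 :: s)) (bounded_partitions n j.*2.+1) =
  j * ('C(n + j + 1, n) - 'C(n + j, n)).
Proof.
set a := j.*2.+1; have oa : odd a by rewrite /= odd_double.
rewrite count_sumE (eq_big_seq (fun s => \sum_(e <- evens a) only_even_part e s)); last first.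
  move=> s; rewrite mem_bounded_partitions => /and3P[_ bs _].
  rewrite (one_even_part_sum a) /= ?bs ?leqnn //.
  apply: eq_big_seq => e; rewrite mem_filter => /andP[ev _].
  by rewrite only_even_part_cons_odd.
rewrite exchange_big /= (eq_big_seq (fun _ => 'C(n + j + 1, n) - 'C(n + j, n))); last first.
  move=> e; rewrite mem_filter mem_iota => /andP[ev /andP[e_gt0 e_le]].
  rewrite -count_sumE count_only_even_part // !count_all_bounded_partitions.
  rewrite count_to_predU1 // count_to_odd /= half_double.
  have -> : e <= a by rewrite -ltnS -add1n.
  by congr ('C(_, _) - 'C(_, _)); lia.
by rewrite big_const_seq count_predT size_evens iter_addn_0 mulnC /= uphalf_double.
Qed.

Lemma count_one_even_even_largest i n : 0 < i ->
  count (fun s => one_even_part (i.*2 :: s)) (bounded_partitions n i.*2) = 'C(n + i, n).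
Proof.
move=> i_gt0.
rewrite (eq_count (fun s => one_even_part_cons_even _ s (negbT (odd_double i)))).
rewrite count_all_bounded_partitions count_to_predU1 ?odd_double ?double_gt0 //.
by rewrite count_to_odd uphalf_double leqnn; congr 'C(_, _); lia.
Qed.

(* The number of partitions counted by g_1(M) whose largest part is a <= M. *)
Definition g1_term M a :=
  if odd a then a./2 * 'C(M - a./2 - 1, a./2 + 1) else 'C(M - a./2, a./2).

Lemma count_one_even_largest n a : 0 < a ->
  count (fun s => one_even_part (a :: s)) (bounded_partitions n a) = g1_term (n + a) a.
Proof.
have [[j ->] | [i ->]] : (exists j, a = j.*2.+1) \/ (exists i, a = i.*2).
  by rewrite -(odd_double_half a); case: (odd a); [left | right]; eexists.
- move=> _; rewrite count_one_even_odd_largest /g1_term /= odd_double uphalf_double.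
  congr (j * _); case: n => [|n]; first by rewrite !bin0 subnn bin_small // -addnn; lia.
  rewrite addn1 binS addKn -[RHS]bin_sub; last by rewrite -addnn; lia.
  by congr 'C(_, _); rewrite -addnn; lia.
- rewrite double_gt0 => i_gt0; rewrite count_one_even_even_largest // /g1_term.
  rewrite odd_double half_double -addnn addnA addnK -[RHS]bin_sub ?leq_addl //.
  by rewrite addnK.
Qed.

Lemma g1_term_eq0 M a : M < a -> g1_term M a = 0.
Proof.
move=> Ma; have := odd_double_half a; rewrite /g1_term -addnn.
by case: (odd a) => /= aE; rewrite bin_small ?muln0 //; lia.
Qed.

Lemma g1_term_pair M k :
  g1_term M k.*2.+1 + g1_term M k.*2.+2 = (k + 1) * 'C(M - k - 1, k + 1).
Proof.
rewrite /g1_term /= odd_double uphalf_double /= half_double.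
by rewrite -(addn1 k) subnDA mulnDl mul1n.
Qed.

Lemma sum_nat_pairs (F : nat -> nat) N :
  \sum_(0 <= a < N.*2) F a = \sum_(0 <= k < N) (F k.*2 + F k.*2.+1).
Proof.
elim: N => [|N IH]; first by rewrite !big_geq.
by rewrite doubleS !big_nat_recr //= IH addnA.
Qed.

Lemma sum_g1_term M :
  \sum_(1 <= a < M.+1) g1_term M a = \sum_(0 <= k < M) (k + 1) * 'C(M - k - 1, k + 1).
Proof.
have widen : \sum_(0 <= a < M) g1_term M a.+1 = \sum_(0 <= a < M.*2) g1_term M a.+1.
  rewrite -addnn (@big_cat_nat _ _ _ M 0 (M + M)) ?leq_addr //=.
  rewrite [X in _ = _ + X]big1_seq ?addn0 //.
  by move=> a /andP[_]; rewrite mem_index_iota => /andP[Ma _]; apply: g1_term_eq0.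
rewrite big_add1 /= widen sum_nat_pairs.
by apply: eq_bigr => k _; rewrite g1_term_pair.
Qed.

Definition perimeter_partitions M :=
  [seq a :: s | a <- iota 1 M, s <- bounded_partitions (M - a) a].

Lemma uniq_perimeter_partitions M : uniq (perimeter_partitions M).
Proof.
apply: allpairs_uniq_dep => [|a _|]; rewrite ?iota_uniq ?uniq_bounded_partitions //.
by move=> [a s] [b t] _ _ /= [-> ->].
Qed.

Lemma mem_perimeter_partitions M l :
  (l \in perimeter_partitions M) = [&& is_partition l, l != [::] & perimeter l == M].
Proof.
rewrite /is_partition /perimeter; apply/allpairsPdep/idP => [[a [s [aM sP ->]]] | ].
  move: aM sP; rewrite mem_iota mem_bounded_partitions /= => aM /and3P[/eqP-> bs ss].
  have pos_s : all (leq 1) s by apply: sub_all bs => x /andP[].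
  have le_s : all (geq a) s by apply: sub_all bs => x /andP[].
  rewrite (path_sortedE geq_trans) ss pos_s le_s !andbT /=.
  by apply/andP; split; [lia | apply/eqP; lia].
case: l => [|a s] //=; rewrite (path_sortedE geq_trans).
move=> /andP[/and3P[/andP[a_gt0 pos_s] le_s ss] /eqP per].
exists a, s; split => //; first by rewrite mem_iota; lia.
rewrite mem_bounded_partitions ss andbT; apply/andP; split.
  by rewrite -per addnS subn1 /= addKn.
by apply/allP => x xs; rewrite (allP pos_s x xs); exact: (allP le_s x xs).
Qed.

Theorem mainTheorem10 (M : nat) : 1 <= M ->
  counts (g1_pred M) (\sum_(0 <= k < M) (k + 1) * 'C(M - k - 1, k + 1)).
Proof.
move=> _; exists [seq l <- perimeter_partitions M | one_even_part l]; split.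
- by rewrite filter_uniq ?uniq_perimeter_partitions.
- by move=> l; rewrite mem_filter mem_perimeter_partitions andbC /g1_pred -!andbA.
rewrite size_filter count_allpairs_cons -sum_g1_term.
apply: eq_big_nat => a /andP[a_gt0 aM].
by rewrite count_one_even_largest // subnK.
Qed.
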